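(* Let $\mathcal{G}$ be an effective ample groupoid. The following are equivalent: (1) $(\llbracket\mathcal{G}\rrbracket,\mathcal{G}^{(0)})$ is locally moving, i.e.\ for every non-empty open $A\subseteq\mathcal{G}^{(0)}$ there is $\gamma\in\llbracket\mathcal{G}\rrbracket\setminus\{1\}$ with $\operatorname{supp}(\gamma)\subseteq A$; (2) every non-empty clopen subset of $\mathcal{G}^{(0)}$ contains two distinct points of some single $\mathcal{G}$-orbit.
   Context: Étale groupoid: topological groupoid whose range map $r(g)=gg^{-1}$ is a local homeomorphism, source $s(g)=g^{-1}g$; ample: étale with $\mathcal{G}^{(0)}$ Hausdorff having a basis of compact open sets; effective: interior of $\{g:s(g)=r(g)\}$ equals $\mathcal{G}^{(0)}$. $\mathcal{G}$-orbit of $x$: $\{r(g):s(g)=x\}$. A full bisection is an open $U$ with $s,r$ injective on $U$ and $s(U)=r(U)=\mathcal{G}^{(0)}$; $\pi_U=r|_U\circ(s|_U)^{-1}$. $\operatorname{supp}(\phi)$ is the closure of the set of points moved by $\phi$. $\llbracket\mathcal{G}\rrbracket$ is the group of all $\pi_U$ for full bisections $U$ with $\operatorname{supp}(\pi_U)$ compact. *)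

From HB Require Import structures.
From mathcomp Require Import all_boot all_order.
From mathcomp Require Import all_classical all_reals all_analysis.
Set Implicit Arguments. Unset Strict Implicit. Unset Printing Implicit Defensive.
Local Open Scope classical_set_scope.

Definition rel_open {T : topologicalType} (U A : set T) : Prop :=
  exists O : set T, open O /\ A = O `&` U.
Definition rel_closure {T : topologicalType} (U A : set T) : set T :=
  closure A `&` U.
Definition rel_clopen {T : topologicalType} (U A : set T) : Prop :=
  A `<=` U /\ rel_open U A /\ rel_open U (U `\` A).

(* A topological groupoid on the space T.  Multiplication is given as a total
   function but is only constrained on composable pairs (s g = r h). *)
Record top_groupoid (T : topologicalType) := TopGroupoid {
  units : set T;
  src : T -> T;
  rng : T -> T;
  mul : T -> T -> T;
  inv : T -> T;
  src_units : forall g, units (src g);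
  rng_units : forall g, units (rng g);
  src_unit : forall u, units u -> src u = u;
  rng_unit : forall u, units u -> rng u = u;
  src_mul : forall g h, src g = rng h -> src (mul g h) = src h;
  rng_mul : forall g h, src g = rng h -> rng (mul g h) = rng g;
  mulA : forall g h k, src g = rng h -> src h = rng k ->
    mul (mul g h) k = mul g (mul h k);
  mul_rng : forall g, mul (rng g) g = g;
  mul_src : forall g, mul g (src g) = g;
  src_inv : forall g, src (inv g) = rng g;
  rng_inv : forall g, rng (inv g) = src g;
  mulV : forall g, mul g (inv g) = rng g;
  mulVg : forall g, mul (inv g) g = src g;
  mul_cont : {within [set p : T * T | src p.1 = rng p.2],
               continuous (fun p : T * T => mul p.1 p.2)};
  inv_cont : continuous inv
}.

Section GroupoidDefs.
Context {T : topologicalType} (G : top_groupoid T).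

(* r : G -> G^(0) is a local homeomorphism. *)
Definition etale : Prop :=
  forall g, exists V : set T, [/\ open V, V g, {in V &, injective (rng G)},
    {within V, continuous (rng G)} &
    forall W, open W -> W `<=` V -> rel_open (units G) (rng G @` W)].

Definition units_hausdorff : Prop :=
  forall x y, units G x -> units G y -> x <> y ->
    exists A B : set T, [/\ open A, open B, A x, B y &
      A `&` B `&` units G = set0].

Definition units_compact_open_basis : Prop :=
  forall (x : T) (W : set T), units G x -> open W -> W x ->
    exists K : set T, [/\ K `<=` units G, rel_open (units G) K, compact K,
      K x & K `<=` W].

Definition ample : Prop :=
  [/\ etale, units_hausdorff & units_compact_open_basis].

Definition effective : Prop :=
  interior [set g | src G g = rng G g] = units G.

Definition full_bisection (V : set T) : Prop :=
  [/\ open V, {in V &, injective (src G)}, {in V &, injective (rng G)},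
    src G @` V = units G & rng G @` V = units G].

(* For a full bisection V, pi_V = r|_V o (s|_V)^-1; the set of points it
   moves is {x | pi_V x <> x} = {s g | g in V, r g <> s g}. *)
Definition moved (V : set T) : set T :=
  [set x | exists g, [/\ V g, src G g = x & rng G g <> x]].

Definition supp (V : set T) : set T := rel_closure (units G) (moved V).

(* pi_V belongs to the topological full group [[G]]. *)
Definition in_full_group (V : set T) : Prop :=
  full_bisection V /\ compact (supp V).

Definition locally_moving : Prop :=
  forall A : set T, A `<=` units G -> rel_open (units G) A -> A !=set0 ->
    exists V : set T, [/\ in_full_group V, moved V !=set0 & supp V `<=` A].

Definition same_orbit (x y : T) : Prop :=
  exists g, src G g = x /\ rng G g = y.

Definition clopen_orbit_condition : Prop :=
  forall C : set T, rel_clopen (units G) C -> C !=set0 ->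
    exists x y, [/\ C x, C y, x <> y & same_orbit x y].

End GroupoidDefs.

From Pilot Require Import Defs.
From mathcomp Require Import all_boot all_order.
From mathcomp Require Import all_classical all_reals all_analysis.
Set Implicit Arguments. Unset Strict Implicit. Unset Printing Implicit Defensive.
Local Open Scope classical_set_scope.
Local Notation inv := Pilot.Defs.inv.
Local Notation units := Pilot.Defs.units.
Local Notation src := Pilot.Defs.src.
Local Notation rng := Pilot.Defs.rng.

(* (1) => (2): a nontrivial pi_V supported in a clopen set C moves some x in C
   to a point of C, and x, pi_V x lie in one orbit.
   (2) => (1): inside the given open set pick a compact open K; it is clopen,
   so some g has distinct source and range in K.  Shrinking a bisection around
   g gives an open bisection W whose source and range sets are compact,
   disjoint and contained in K.  Then W, W^-1 and the units outside
   s(W) u r(W) form a full bisection which swaps s(W) with r(W) and fixes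
   everything else, so its support is a compact subset of K. *)

Lemma in_setU_injective {A B : Type} (f : A -> B) (X Y : set A) :
  {in X &, injective f} -> {in Y &, injective f} -> f @` X `&` f @` Y = set0 ->
  {in X `|` Y &, injective f}.
Proof.
move=> injX injY XY0 a b /set_mem[Xa|Ya] /set_mem[Xb|Yb] fab.
- exact: injX (mem_set Xa) (mem_set Xb) fab.
- suff : (f @` X `&` f @` Y) (f a) by rewrite XY0.
  by split; [exists a|rewrite fab; exists b].
- suff : (f @` X `&` f @` Y) (f a) by rewrite XY0.
  by split; [rewrite fab; exists b|exists a].
- exact: injY (mem_set Ya) (mem_set Yb) fab.
Qed.

Lemma compact_of_open_injective_image {T U : topologicalType} (f : T -> U)
    (W : set T) :
  open W -> {in W &, injective f} ->
  (forall B, open B -> B `<=` W -> open (f @` B)) ->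
  compact (f @` W) -> compact W.
Proof.
move=> oW injf fopen cfW.
have [->|/set0P[w Ww]] := eqVneq W set0; first exact: compact0.
(* W is the image of f @` W under the inverse of f on W, which is continuous
   since f is open on W. *)
rewrite -(injpinv_image (fun=> w) injf); apply: continuous_compact => //.
rewrite continuous_open_subspace; last exact: fopen.
move=> _ /set_mem[h Wh <-] B; rewrite /= (pinvKV _ injf) ?inE //.
rewrite nbhsE => -[C [oC Ch] CB].
have oWC : open (f @` (W `&` C)).
  by apply: fopen; [exact: openI|exact: subIsetl].
apply: filterS (open_nbhs_nbhs (conj oWC (ex_intro2 _ _ h (conj Wh Ch) erefl))).
by move=> _ [t [Wt Ct] <-]; rewrite /= (pinvKV _ injf) ?inE //; exact: CB.
Qed.

Section TopGroupoid.
Variables (T : topologicalType) (G : top_groupoid T).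

Lemma inv_involutive : involutive (inv G).
Proof.
(* h = h (g^-1 g) = (h g^-1) g = r(g) g for h = (g^-1)^-1. *)
move=> g; set h := inv G (inv G g).
have sh : src G h = src G g by rewrite /h src_inv rng_inv.
rewrite -[LHS](mul_src G) sh -(Defs.mulVg G g) -Defs.mulA; last 2 first.
- by rewrite /h src_inv.
- by rewrite src_inv.
by rewrite /h Defs.mulVg src_inv mul_rng.
Qed.

Lemma inv_injective : injective (inv G).
Proof. exact: inv_inj inv_involutive. Qed.

Lemma inv_unit u : units G u -> inv G u = u.
Proof.
move=> Uu; rewrite -[LHS](mul_src G) src_inv (rng_unit Uu).
by rewrite Defs.mulVg src_unit.
Qed.

Lemma image_src_preimage_inv (B : set T) :
  src G @` B = rng G @` (inv G @^-1` B).
Proof.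
apply/seteqP; split=> _ [h Bh <-].
- by exists (inv G h); rewrite /preimage /= ?inv_involutive ?rng_inv.
- by exists (inv G h); rewrite ?src_inv.
Qed.

Lemma open_preimage_inv (B : set T) : open B -> open (inv G @^-1` B).
Proof. exact: (continuousP _).1 (@inv_cont _ G) B. Qed.

Lemma units_open_of_effective : effective G -> open (units G).
Proof. by move=> <-; exact: open_interior. Qed.

Lemma full_bisection_of_inv_closed (V : set T) :
  open V -> (forall h, V h -> V (inv G h)) -> {in V &, injective (src G)} ->
  src G @` V = units G -> full_bisection G V.
Proof.
move=> oV Vinv sinj sV.
have rV : rng G @` V = src G @` V.
  apply/seteqP; split=> _ [h Vh <-]; exists (inv G h);
    rewrite ?src_inv ?rng_inv //; exact: Vinv.
split=> //; last by rewrite rV.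
move=> h1 h2 /set_mem V1 /set_mem V2 r12; apply: inv_injective.
by apply: sinj; rewrite ?src_inv //; apply/mem_set/Vinv.
Qed.

Lemma moved_sub_supp (V : set T) : moved G V `<=` supp G V.
Proof.
move=> x mx; split; first exact: subset_closure.
by case: mx => g [_ <- _]; exact: src_units.
Qed.

Definition open_bisection (W : set T) : Prop :=
  [/\ open W, {in W &, injective (src G)} & {in W &, injective (rng G)}].

Lemma open_bisectionS (V W : set T) :
  open W -> W `<=` V -> open_bisection V -> open_bisection W.
Proof.
move=> oW WV [_ sinj rinj].
split=> // h1 h2 /set_mem/WV/mem_set V1 /set_mem/WV/mem_set V2.
- exact: sinj.
- exact: rinj.
Qed.

Lemma bisection_ends_units (W : set T) :
  src G @` W `|` rng G @` W `<=` units G.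
Proof.
by move=> _ [[h _ <-]|[h _ <-]]; [exact: src_units|exact: rng_units].
Qed.

Section Ample.
Hypotheses (units_open : open (units G)) (etG : etale G)
  (hausG : units_hausdorff G) (basisG : units_compact_open_basis G).

Lemma open_of_rel_open (X : set T) : rel_open (units G) X -> open X.
Proof. by move=> [B [oB ->]]; exact: openI. Qed.

Lemma rng_continuous : continuous (rng G).
Proof.
move=> g; have [V [oV Vg _ cV _]] := etG g.
by move: cV; rewrite continuous_open_subspace // => /(_ g (mem_set Vg)).
Qed.

Lemma src_continuous : continuous (src G).
Proof.
have -> : src G = rng G \o inv G by apply: funext => g /=; rewrite rng_inv.
by move=> g; apply: continuous_comp; [exact: inv_cont|exact: rng_continuous].
Qed.

Lemma open_preimage_src (B : set T) : open B -> open (src G @^-1` B).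
Proof. exact: (continuousP _).1 src_continuous B. Qed.

Lemma open_preimage_rng (B : set T) : open B -> open (rng G @^-1` B).
Proof. exact: (continuousP _).1 rng_continuous B. Qed.

Lemma open_bisection_nbhd g : exists U : set T, [/\ U g, open_bisection U &
  forall B, open B -> B `<=` U -> open (src G @` B)].
Proof.
have [V1 [oV1 V1g rinj1 _ _]] := etG g.
have [V2 [oV2 V2g rinj2 _ ropen2]] := etG (inv G g).
exists (V1 `&` inv G @^-1` V2); split=> //; first split.
- by apply: openI => //; exact: open_preimage_inv.
- move=> h1 h2 /set_mem[_ V21] /set_mem[_ V22] s12; apply: inv_injective.
  by apply: rinj2; rewrite ?inE ?rng_inv.
- by move=> h1 h2 /set_mem[V11 _] /set_mem[V12 _]; apply: rinj1; rewrite inE.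
move=> B oB BU; apply: open_of_rel_open; rewrite image_src_preimage_inv.
apply: ropen2; first exact: open_preimage_inv.
by move=> h /BU[_]; rewrite /preimage /= inv_involutive.
Qed.

Lemma compact_rng_image (U W : set T) :
  (forall B, open B -> B `<=` U -> open (src G @` B)) -> W `<=` U ->
  open_bisection W -> compact (src G @` W) -> compact (rng G @` W).
Proof.
move=> Uopen WU [oW sinjW _] cW.
apply: continuous_compact; first exact: continuous_subspaceT rng_continuous.
apply: (compact_of_open_injective_image oW sinjW) cW.
by move=> B oB BW; exact: Uopen B oB (subset_trans BW WU).
Qed.

Lemma closure_compact_units (K : set T) :
  compact K -> K `<=` units G -> closure K `&` units G `<=` K.
Proof.
move=> cK KU z [clz Uz]; apply: contrapT => Kz.
have PF : ProperFilter (within K (nbhs z)) by apply: within_nbhs_proper.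
have [c [Kc clc]] := cK _ PF (withinT _ (@nbhs_filter _ z)).
have zc : z <> c by move=> zc; apply: Kz; rewrite zc.
have [A [B [oA oB Az Bc AB0]]] := hausG Uz (KU c Kc) zc.
have FA : within K (nbhs z) (A `&` K).
  by apply: filterS (open_nbhs_nbhs (conj oA Az)) => t At Kt.
have [t [[At Kt] Bt]] := clc _ _ FA (open_nbhs_nbhs (conj oB Bc)).
suff : (A `&` B `&` units G) t by rewrite AB0.
by split; [split|exact: KU].
Qed.

Lemma open_units_setD_compact (K : set T) :
  compact K -> K `<=` units G -> open (units G `\` K).
Proof.
move=> cK KU; rewrite openE => z [Uz nKz].
apply: contrapT => nint; apply/nKz/(closure_compact_units cK KU); split=> //.
move=> B nB; apply: contrapT => nKB; apply: nint.
apply: filterS (filterI nB (open_nbhs_nbhs (conj units_open Uz))) => t [Bt Ut].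
by split=> // Kt; apply: nKB; exists t.
Qed.

Lemma compact_open_rel_clopen (K : set T) :
  compact K -> K `<=` units G -> rel_open (units G) K -> rel_clopen (units G) K.
Proof.
move=> cK KU roK; do 2!split=> //; exists (units G `\` K).
by split; [exact: open_units_setD_compact|rewrite setIidl // => t []].
Qed.

Lemma compact_supp (V K : set T) : compact K -> K `<=` units G ->
  moved G V `<=` K -> compact (supp G V) /\ supp G V `<=` K.
Proof.
move=> cK KU movedK.
have suppK : supp G V `<=` K.
  move=> t [clt Ut]; apply: (closure_compact_units cK KU).
  by split=> //; exact: closureS movedK _ clt.
split=> //; suff -> : supp G V = K `&` closure (moved G V).
  by apply: compact_closedI => //; exact: closed_closure.
apply/seteqP; split=> t; first by move=> St; split; [exact: suppK|case: St].
by move=> [Kt clt]; split=> //; exact: KU.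
Qed.

Section SwapBisection.
Variable W : set T.
Hypotheses (bisW : open_bisection W)
  (cmpW : compact (src G @` W `|` rng G @` W))
  (disjW : src G @` W `&` rng G @` W = set0).

Definition swap_bisection : set T :=
  W `|` inv G @^-1` W `|` (units G `\` (src G @` W `|` rng G @` W)).

Let src_rest : src G @` (units G `\` (src G @` W `|` rng G @` W)) =
  units G `\` (src G @` W `|` rng G @` W).
Proof.
apply/seteqP; split=> [_ [u [Uu nu] <-]|u [Uu nu]].
- by rewrite src_unit.
- by exists u; rewrite ?src_unit.
Qed.

Let src_inv_part : src G @` (inv G @^-1` W) = rng G @` W.
Proof.
apply/seteqP; split=> _ [h Wh <-].
- by exists (inv G h); rewrite ?rng_inv.
- by exists (inv G h); rewrite /preimage /= ?inv_involutive ?src_inv.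
Qed.

Let src_W_part : src G @` (W `|` inv G @^-1` W) = src G @` W `|` rng G @` W.
Proof. by rewrite image_setU src_inv_part. Qed.

Lemma full_bisection_swap : full_bisection G swap_bisection.
Proof.
have [oW sinjW rinjW] := bisW; apply: full_bisection_of_inv_closed.
- apply: openU; first by apply: openU => //; exact: open_preimage_inv.
  by apply: open_units_setD_compact => //; exact: bisection_ends_units.
- move=> h [[Wh|Wih]|[Uh nh]]; [left; right|left; left|right].
  + by rewrite /preimage /= inv_involutive.
  + by [].
  + by rewrite inv_unit.
- apply: in_setU_injective; last by rewrite src_rest src_W_part setDIK.
  + apply: in_setU_injective; rewrite ?src_inv_part //.
    move=> h1 h2 /set_mem W1 /set_mem W2; rewrite -!rng_inv => e.
    by apply: inv_injective; apply: rinjW; rewrite ?inE.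
  + by move=> u1 u2 /set_mem[U1 _] /set_mem[U2 _]; rewrite !src_unit.
- rewrite image_setU src_rest src_W_part setDUK //.
  exact: bisection_ends_units.
Qed.

Lemma moved_swap : moved G swap_bisection `<=` src G @` W `|` rng G @` W.
Proof.
move=> _ [h [[[Wh|Wih]|[Uh _]] <- nh]]; first by left; exists h.
  by right; rewrite -rng_inv; exists (inv G h).
by exfalso; apply: nh; rewrite src_unit ?rng_unit.
Qed.

End SwapBisection.

Lemma disjoint_ends_bisection_nbhd g (N : set T) :
  open N -> N g -> src G g <> rng G g ->
  exists W : set T, [/\ W g, W `<=` N, open_bisection W,
    compact (src G @` W `|` rng G @` W) &
    src G @` W `&` rng G @` W = set0].
Proof.
move=> oN Ng sgr.
have [U [Ug bisU Uopen]] := open_bisection_nbhd g.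
have [P [Q [oP oQ Pg Qg PQ]]] := hausG (src_units G g) (rng_units G g) sgr.
pose U1 := U `&` N `&` src G @^-1` P `&` rng G @^-1` Q.
have U1g : U1 g by do ![split].
have U1U : U1 `<=` U by move=> h [[[]]].
have oU1 : open U1.
  have [oU _ _] := bisU; do !apply: openI => //.
  - exact: open_preimage_src.
  - exact: open_preimage_rng.
have [K1 [_ roK1 cK1 K1g K1U1]] :=
  basisG (src_units G g) (Uopen _ oU1 U1U) (ex_intro2 _ _ g U1g erefl).
pose W := U1 `&` src G @^-1` K1.
have WU : W `<=` U by move=> h [/U1U].
have oW : open W.
  by apply: openI => //; exact/open_preimage_src/open_of_rel_open.
have bisW : open_bisection W := open_bisectionS oW WU bisU.
have sW : src G @` W = K1.
  apply/seteqP; split=> [_ [h [_ K1h] <-] //|k K1k].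
  by have [h U1h shk] := K1U1 k K1k; exists h; rewrite // /W /preimage /= shk.
exists W; split=> //.
- by move=> h [[[[]]]].
- apply: compactU; first by rewrite sW.
  by apply: (compact_rng_image Uopen WU bisW); rewrite sW.
- apply/seteqP; split=> // _ [[h [[[_ Ph] _] _] <-] [h' [[_ Qh'] _] e]].
  suff : (P `&` Q `&` units G) (src G h) by rewrite PQ.
  by split; [split=> //; rewrite -e|exact: src_units].
Qed.

Lemma clopen_orbit_locally_moving :
  clopen_orbit_condition G -> locally_moving G.
Proof.
move=> orbG A AU roA [a Aa].
have [K [KU roK cK Ka KA]] := basisG (AU a Aa) (open_of_rel_open roA) Aa.
have [x [y [Kx Ky xy [g [sgx rgy]]]]] :=
  orbG K (compact_open_rel_clopen cK KU roK) (ex_intro _ a Ka).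
have oK := open_of_rel_open roK.
have oN : open (src G @^-1` K `&` rng G @^-1` K).
  by apply: openI; [exact: open_preimage_src|exact: open_preimage_rng].
have Ng : (src G @^-1` K `&` rng G @^-1` K) g.
  by split; rewrite /preimage /= ?sgx ?rgy.
have sgr : src G g <> rng G g by rewrite sgx rgy.
have [W [Wg WN bisW cmpW disjW]] := disjoint_ends_bisection_nbhd oN Ng sgr.
have [cmp_supp suppW] :=
  compact_supp cmpW (@bisection_ends_units W) (@moved_swap W).
exists (swap_bisection W); split.
- by split=> //; exact: full_bisection_swap bisW cmpW disjW.
- exists (src G g), g; split=> //; first by left; left.
  by move=> /esym.
- by move=> t /suppW[] [h /WN[? ?] <-]; apply: KA.
Qed.

End Ample.

Lemma locally_moving_clopen_orbit :
  locally_moving G -> clopen_orbit_condition G.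
Proof.
move=> lmG C [CU [roC _]] C0.
have [V [[[_ _ rinj sV _] _] [_ [g [Vg <- rgs]]] suppC]] := lmG C CU roC C0.
have [h Vh shg] : (src G @` V) (rng G g) by rewrite sV; exact: rng_units.
have rhs : rng G h <> src G h.
  move=> rhsh; apply: rgs; rewrite -shg; congr (src G _).
  by apply: rinj; rewrite ?inE // rhsh shg.
exists (src G g), (rng G g); split; last by exists g.
- by apply/suppC/moved_sub_supp; exists g.
- by apply/suppC/moved_sub_supp; rewrite -shg; exists h.
- by move=> /esym.
Qed.

End TopGroupoid.

Theorem proposition7p7 (T : topologicalType) (G : top_groupoid T) :
  ample G -> effective G ->
  (locally_moving G <-> clopen_orbit_condition G).
Proof.
move=> [etG hausG basisG] /units_open_of_effective unitsG.
split; first exact: locally_moving_clopen_orbit.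
exact: clopen_orbit_locally_moving unitsG etG hausG basisG.
Qed.
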